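(* Let $A,B$ be Pareto sets of size $n$ each and let $k$ be the size of their Pareto sum. The Successive Sweep Search algorithm computes the Pareto sum of $A$ and $B$ in $\mathcal{O}(n\log n+nk)$ time using $\mathcal{O}(n+k)$ space.
   Context: For $p,p'\in\mathbb{R}^2$, $p$ dominates $p'$ if $p\neq p'$, $p.x\le p'.x$ and $p.y\le p'.y$. A Pareto set is a set $S\subset\mathbb{R}^2$ in which no point dominates another. The Successive Sweep Search algorithm first sorts $A$ and $B$ lexicographically ($S_i$ = element of rank $i$) and uses the Minkowski matrix $M_{ij}=A_i+B_j$ (computed on demand). The Pareto sum $C$ is the set of entries of $M$ not dominated by any entry of $M$. Starting with $C=\{M_{11},M_{nn}\}$ and search range $[x_{\min},x_{\max})\times[y_{\min},y_{\max})$ with $x_{\min}=M_{11}.x$, $x_{\max}=M_{nn}.x$, $y_{\min}=M_{nn}.y$, $y_{\max}=M_{11}.y$, it repeatedly finds the lexicographically smallest entry $m$ of $M$ in the current range; if none exists it stops, otherwise it adds $m$ to $C$ and sets $x_{\min}=m.x$, $y_{\max}=m.y$. The range minimum is found by a single left-to-right sweep: keep a row index $i$, starting at $i=n$ in column $1$; in each column $j$, move upward as long as $i\ge2$ and $M_{i-1,j}$ satisfies $x\ge x_{\min}$ and $y<y_{\max}$; if $M_{ij}$ lies in the range and is lexicographically smaller than the current candidate, it becomes the candidate; then move to column $j+1$ with the same $i$; after the last column the candidate is returned. *)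

(* Successive Sweep Search (SSS) for Pareto sums, with an
   explicit instrumented cost model (time = elementary steps, space = peak
   number of stored points/registers). *)
From mathcomp Require Import all_boot all_order all_algebra.
Set Implicit Arguments. Unset Strict Implicit. Unset Printing Implicit Defensive.
Import Order.TTheory GRing.Theory Num.Theory.
Local Open Scope ring_scope.

Section SSS.
Variable R : realDomainType.

Definition point := (R * R)%type.

Definition padd (p q : point) : point := (p.1 + q.1, p.2 + q.2).

Definition dominates (p q : point) : bool :=
  [&& p != q, p.1 <= q.1 & p.2 <= q.2].

Definition pareto_set (S : seq point) : bool :=
  uniq S && all (fun p => all (fun q => ~~ dominates p q) S) S.

Definition lexlt (p q : point) : bool := (p.1 < q.1) || ((p.1 == q.1) && (p.2 < q.2)).
Definition lexle (p q : point) : bool := (p == q) || lexlt p q.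

Definition minkowski (A B : seq point) : seq point :=
  [seq padd a b | a <- A, b <- B].

Definition pareto_sum (A B : seq point) : seq point :=
  undup [seq p <- minkowski A B | ~~ has (fun q => dominates q p) (minkowski A B)].

Fixpoint merge_c (s1 : seq point) : seq point -> seq point * nat :=
  fix m2 (s2 : seq point) :=
    match s1, s2 with
    | [::], _ => (s2, 0%N)
    | _, [::] => (s1, 0%N)
    | x1 :: s1', x2 :: s2' =>
        if lexle x1 x2 then let r := merge_c s1' s2 in (x1 :: r.1, r.2.+1)
        else let r := m2 s2' in (x2 :: r.1, r.2.+1)
    end.

(* returns (sorted list, time, peak space); fuel = size of the list suffices *)
Fixpoint msort_f (f : nat) (s : seq point) : seq point * nat * nat :=
  match f with
  | 0 => (s, 0%N, size s)
  | f'.+1 =>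
      if (size s <= 1)%N then (s, 1%N, size s) else
      let h := ((size s)./2)%N in
      let '(r1, t1, p1) := msort_f f' (take h s) in
      let '(r2, t2, p2) := msort_f f' (drop h s) in
      let '(r, t3) := merge_c r1 r2 in
      (r, (t1 + t2 + t3 + size s + 1)%N,
       maxn (size s + p1)%N (maxn (size s + size r1 + p2)%N
                                  (size r1 + size r2 + size r)%N))
  end.

Definition msort (s : seq point) := msort_f (size s) s.

Section Sweep.
Variables (SA SB : seq point) (xmin xmax ymin ymax : R).

(* entry M_{i+1,j+1} (0-based indices i j) *)
Definition entry (i j : nat) : point := padd (nth (0, 0) SA i) (nth (0, 0) SB j).

Definition in_range (p : point) : bool :=
  [&& xmin <= p.1, p.1 < xmax, ymin <= p.2 & p.2 < ymax].

Definition up_ok (p : point) : bool := (xmin <= p.1) && (p.2 < ymax).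

Fixpoint climb (f i j : nat) : nat * nat :=
  match f with
  | 0 => (i, 0%N)
  | f'.+1 =>
      if (1 <= i)%N && up_ok (entry i.-1 j)
      then let r := climb f' i.-1 j in (r.1, r.2.+1)
      else (i, 0%N)
  end.

Fixpoint sweep (js : seq nat) (i : nat) (cand : option point) : option point * nat :=
  match js with
  | [::] => (cand, 0%N)
  | j :: js' =>
      let '(i', st) := climb i i j in
      let m := entry i' j in
      let better := if cand is Some c then lexlt m c else true in
      let cand' := if in_range m && better then Some m else cand in
      let '(res, t) := sweep js' i' cand' in
      (res, (t + st + 1)%N)
  end.

(* lexicographically smallest entry in the current range (or None), and time *)
Definition range_min : option point * nat :=
  let n := size SA in
  let '(c, t) := sweep (iota 0 n) n.-1 None in (c, t.+1).

End Sweep.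

Fixpoint sss_loop (f : nat) (SA SB : seq point) (xmax ymin : R)
    (C : seq point) (xmin ymax : R) : seq point * nat * nat :=
  match f with
  | 0 => (C, 0%N, 0%N)
  | f'.+1 =>
      let '(res, t) := range_min SA SB xmin xmax ymin ymax in
      let sp := (size SA + size SB + size C + 10)%N in
      match res with
      | None => (C, t.+1, sp)
      | Some m =>
          let '(C', t', sp') := sss_loop f' SA SB xmax ymin (rcons C m) m.1 m.2 in
          (C', (t + t' + 1)%N, maxn sp sp')
      end
  end.

Definition SSS (A B : seq point) : seq point * nat * nat :=
  let '(SA, tA, pA) := msort A in
  let '(SB, tB, pB) := msort B in
  let n := size SA in
  let M11 := entry SA SB 0 0 in
  let Mnn := entry SA SB n.-1 n.-1 in
  let C0 := undup [:: M11; Mnn] in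
  let '(C, tL, pL) := sss_loop (n * n).+1 SA SB Mnn.1 Mnn.2 C0 M11.1 M11.2 in
  (C, (tA + tB + tL + 1)%N,
   maxn (size B + pA)%N (maxn (size A + size SA + pB)%N pL)).

Definition SSS_output A B := (SSS A B).1.1.
Definition SSS_time A B := (SSS A B).1.2.
Definition SSS_space A B := (SSS A B).2.

End SSS.

(* Sorted lexicographically, a Pareto set is a staircase: x strictly increases
   and y strictly decreases along it.  Hence x increases and y decreases along
   the rows and the columns of the Minkowski matrix, so in each column the
   entries with x >= xmin and y < ymax form a bottom segment, whose top row can
   only move up from one column to the next.  The top entry of that segment is
   the lexicographically smallest in-range entry of the column, so a single
   sweep whose row index never increases finds the range minimum in O(n) steps.
   The range minimum m after the current point c is not dominated, and no Pareto
   point has its x strictly between c.x and m.x; so every round of the main loop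
   outputs the next Pareto point, there are at most k rounds of cost O(n), and
   merge sort adds O(n log n). *)

From mathcomp Require Import all_boot all_order all_algebra.
From mathcomp Require Import lra zify.
Set Implicit Arguments. Unset Strict Implicit. Unset Printing Implicit Defensive.
Import Order.TTheory GRing.Theory Num.Theory.
Local Open Scope ring_scope.

Section Lexicographic.
Variable R : realDomainType.
Implicit Types p q : point R.

Lemma lexle_refl p : lexle p p.
Proof. by rewrite /lexle eqxx. Qed.

Lemma lexle_total : total (@lexle R).
Proof.
move=> [a b] [c d]; rewrite /lexle /lexlt /= !xpair_eqE.
by case: (ltgtP a c) => //= _; case: (ltgtP b d).
Qed.

Lemma lexltNge p q : lexlt p q = ~~ lexle q p.
Proof.
case: p q => [a b] [c d]; rewrite /lexle /lexlt /= !xpair_eqE.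
by case: (ltgtP a c) => //= _; case: (ltgtP b d).
Qed.

Lemma lexltW p q : lexlt p q -> lexle p q.
Proof. by rewrite /lexle => ->; rewrite orbT. Qed.

Lemma lexle_trans : transitive (@lexle R).
Proof.
move=> [a b] [c d] [e f]; rewrite /lexle /lexlt /= !xpair_eqE.
case/orP=> [/andP[/eqP<- /eqP<-] // | lt1].
case/orP=> [/andP[/eqP<- /eqP<-] | lt2]; first by rewrite lt1 orbT.
apply/orP; right.
case/orP: lt1 => [h1|/andP[/eqP h1 h1']]; case/orP: lt2 => [h2|/andP[/eqP h2 h2']].
- by rewrite (lt_trans h1 h2).
- by rewrite -h2 h1.
- by rewrite h1 h2.
- by rewrite h1 h2 eqxx (lt_trans h1' h2') orbT.
Qed.

Lemma dominates_lexlt q p : dominates q p -> lexlt q p.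
Proof.
case: q p => [a b] [c d]; rewrite /dominates /lexlt /= xpair_eqE negb_and.
case/and3P => hne; rewrite le_eqVlt => /orP[/eqP e|->//] h2; subst c.
by rewrite eqxx /= in hne *; rewrite ltxx lt_neqAle hne h2.
Qed.

Lemma lexle_dominates m p : lexle m p -> p.1 <= m.1 -> m != p -> dominates m p.
Proof.
case: m p => [a b] [c d]; rewrite /dominates /lexle /lexlt /= => + h1 hne.
rewrite (negbTE hne) /= => /orP[h|/andP[/eqP e h]]; first lra.
by rewrite e lexx ltW.
Qed.

End Lexicographic.

Lemma merge_cP (R : realDomainType) (s1 s2 : seq (point R)) :
  (merge_c s1 s2).1 = merge (@lexle R) s1 s2
  /\ ((merge_c s1 s2).2 <= size s1 + size s2)%N.
Proof.
elim: s1 s2 => [|x1 s1 IH1] s2; first by case: s2.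
elim: s2 => [|x2 s2 IH2] /=; first by rewrite addn0.
case: ifP => _ /=.
  by case: (IH1 (x2 :: s2)) => -> /= h; split => //; rewrite /= in h; lia.
by move: IH2 => /= [-> h]; split => //; lia.
Qed.

Lemma up_log2_half m : (1 < m)%N -> up_log 2 m = (up_log 2 (m - m./2)).+1.
Proof.
move=> m_gt1; have -> : m = (m.-1).+1 by lia.
by rewrite up_log2S; [congr (up_log 2 _).+1; rewrite -!divn2|]; lia.
Qed.

Lemma msort_time_rec m h L Lh t1 t2 t3 :
  (0 < h <= m)%N -> (h * Lh <= h * L)%N ->
  (t1 <= 4 * h * Lh + h + 1)%N -> (t2 <= 4 * (m - h) * L + (m - h) + 1)%N ->
  (t3 <= m)%N -> (t1 + t2 + t3 + m + 1 <= 4 * m * L.+1 + m + 1)%N.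
Proof. nia. Qed.

Lemma msort_fP (R : realDomainType) (f : nat) (s : seq (point R)) :
  (size s <= f)%N ->
  let: (r, t, p) := msort_f f s in
  [/\ perm_eq r s, sorted (@lexle R) r,
      (t <= 4 * size s * up_log 2 (size s) + size s + 1)%N
    & (p <= 4 * size s)%N].
Proof.
elim: f s => [|f IH] s hs /=.
  by move: hs; rewrite leqn0 => /eqP/size0nil ->.
case: ifP => s_le1.
  by split; [exact: perm_refl | case: s s_le1 {hs} => [|x [|]] | lia | lia].
set m := size s in hs s_le1 *; set h := (m./2)%N.
have sz1 : size (take h s) = h by rewrite size_take; case: ifP => //; lia.
have sz2 : size (drop h s) = (m - h)%N by rewrite size_drop.
have := IH (take h s); rewrite sz1; case: msort_f => [[r1 t1] p1].
move=> /(_ ltac:(lia)) [pr1 so1 ht1 hp1].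
have := IH (drop h s); rewrite sz2; case: msort_f => [[r2 t2] p2].
move=> /(_ ltac:(lia)) [pr2 so2 ht2 hp2].
have [] := merge_cP r1 r2; case: merge_c => r t3 /= -> ht3.
have sr1 : size r1 = h by rewrite (perm_size pr1).
have sr2 : size r2 = (m - h)%N by rewrite (perm_size pr2).
have sr : size (merge (@lexle R) r1 r2) = m by rewrite size_merge size_cat sr1 sr2; lia.
rewrite sr1 sr2 sr in ht3 *; split.
- by rewrite perm_merge -[s in perm_eq _ s](cat_take_drop h) perm_cat.
- exact: (merge_sorted (@lexle_total R) so1 so2).
- have m_gt1 : (1 < m)%N by rewrite ltnNge s_le1.
  rewrite (up_log2_half m_gt1) -/h.
  apply: (msort_time_rec _ _ ht1 ht2); [lia | | lia].
  by apply/leq_mul/leq_up_log; lia.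
- lia.
Qed.

Definition staircase (R : realDomainType) (S : seq (point R)) :=
  forall i j, (i < j)%N -> (j < size S)%N ->
    (nth (0, 0) S i).1 < (nth (0, 0) S j).1 /\ (nth (0, 0) S j).2 < (nth (0, 0) S i).2.

Lemma sorted_pareto_staircase (R : realDomainType) (A S : seq (point R)) :
  pareto_set A -> perm_eq S A -> sorted (@lexle R) S -> staircase S.
Proof.
case/andP=> uA /allP pA pSA so i j lt_ij lt_j.
have lt_i : (i < size S)%N by apply: ltn_trans lt_j.
have := sorted_ltn_nth (@lexle_trans R) (0, 0) so i j lt_i lt_j lt_ij.
have uS : uniq S by rewrite (perm_uniq pSA).
have neq : nth (0, 0) S i != nth (0, 0) S j by rewrite (nth_uniq _ lt_i lt_j uS) neq_ltn lt_ij.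
have Ai : nth (0, 0) S i \in A by rewrite -(perm_mem pSA) mem_nth.
have Aj : nth (0, 0) S j \in A by rewrite -(perm_mem pSA) mem_nth.
move/allP/(_ _ Aj): (pA _ Ai); move/allP/(_ _ Ai): (pA _ Aj).
rewrite /lexle (negbTE neq) /= /dominates neq eq_sym neq /=.
case: (nth (0, 0) S i) => a b; case: (nth (0, 0) S j) => c d /=; rewrite /lexlt /=.
case: (ltgtP a c) => //= _ _; first by rewrite -ltNge.
by move=> /negP nb /ltW bd; case: nb.
Qed.

Lemma staircase_le (R : realDomainType) (S : seq (point R)) i j : staircase S ->
  (i <= j)%N -> (j < size S)%N ->
  (nth (0, 0) S i).1 <= (nth (0, 0) S j).1 /\ (nth (0, 0) S j).2 <= (nth (0, 0) S i).2.
Proof.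
move=> stS; rewrite leq_eqVlt => /orP[/eqP->|lt_ij lt_j]; first by rewrite !lexx.
by have [] := stS _ _ lt_ij lt_j; split; apply: ltW.
Qed.

Lemma size_pareto_sum (R : realDomainType) (A B : seq (point R)) :
  (size (pareto_sum A B) <= size A * size B)%N.
Proof.
apply: leq_trans (size_undup _) _; rewrite size_filter.
by apply: leq_trans (count_size _ _) _; rewrite size_allpairs.
Qed.

Section Matrix.
Variables (R : realDomainType) (SA SB : seq (point R)) (n : nat).
Hypotheses (sizeA : size SA = n) (sizeB : size SB = n).
Hypotheses (stA : staircase SA) (stB : staircase SB) (n_gt0 : (0 < n)%N).

Local Notation E := (entry SA SB).

Lemma entry_le r r' j j' : (r <= r')%N -> (r' < n)%N -> (j <= j')%N -> (j' < n)%N ->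
  (E r j).1 <= (E r' j').1 /\ (E r' j').2 <= (E r j).2.
Proof.
move=> le_r lt_r' le_j lt_j'; rewrite /entry /padd /=.
have [a1 a2] := staircase_le stA le_r ltac:(by rewrite sizeA).
have [b1 b2] := staircase_le stB le_j ltac:(by rewrite sizeB).
split; lra.
Qed.

Lemma entry_lt1 r r' j : (r < r')%N -> (r' < n)%N -> (E r j).1 < (E r' j).1.
Proof.
move=> lt_r lt_r'; rewrite /entry /padd /=.
have [a1 _] := stA lt_r ltac:(by rewrite sizeA).
lra.
Qed.

Definition entry_in_cols j0 m q :=
  exists r j, [/\ (r < n)%N, (j0 <= j < j0 + m)%N & q = E r j].

Definition is_entry := entry_in_cols 0 n.

Section Sweep.
Variables xmin xmax ymin ymax : R.
Local Notation in_rng := (in_range xmin xmax ymin ymax).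
Local Notation climbable := (up_ok xmin ymax).

Lemma up_ok_mono r r' j j' : (r <= r')%N -> (r' < n)%N -> (j <= j')%N -> (j' < n)%N ->
  climbable (E r j) -> climbable (E r' j').
Proof.
move=> le_r lt_r' le_j lt_j'; have [e1 e2] := entry_le le_r lt_r' le_j lt_j'.
by rewrite /up_ok => /andP[u1 u2]; apply/andP; split; lra.
Qed.

Lemma climbP j f i : (i <= f)%N ->
  let: (i', st) := climb SA SB xmin ymax f i j in
  [/\ (i' <= i)%N, st = (i - i')%N, (i' < i)%N -> climbable (E i' j)
    & i' = 0%N \/ ~~ climbable (E i'.-1 j)].
Proof.
elim: f i => [|f IH] i le_if /=.
  by move: le_if; rewrite leqn0 => /eqP ->; split => //; left.
case: ifP => [/andP[i_gt0 ok_up]|stuck]; last first.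
  split; [lia | lia | lia |].
  case: i {le_if} stuck => [|i] stuck; first by left.
  by right; move: stuck => /= ->.
have := IH i.-1 ltac:(lia); case: climb => i' st /=.
case=> le_i' -> ok_i' stop; split; [lia | lia | | exact: stop].
move=> lt_i'; case: (ltnP i' i.-1) => [/ok_i' //|ge_i'].
by have -> : i' = i.-1 by lia.
Qed.

(* The sweep starts in the last row, which need not be climbable. *)
Definition row_ready i j := (i < n)%N && (climbable (E i j) || (i == n.-1)).

Lemma columnP j i : (j < n)%N -> row_ready i j ->
  let: (i', st) := climb SA SB xmin ymax i i j in
  [/\ row_ready i' j, st = (i - i')%N, (i' <= i)%N &
   forall r, (r < n)%N -> in_rng (E r j) -> in_rng (E i' j) /\ lexle (E i' j) (E r j)].
Proof.
move=> lt_j /andP[lt_i ready].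
have := climbP j (leqnn i); case: climb => i' st [le_i' -> ok_climbed stop].
have ready' : row_ready i' j.
  apply/andP; split; first lia.
  by case: (ltnP i' i) => [/ok_climbed -> // | ge_i']; have -> : i' = i by lia.
split=> // r lt_r rng_r.
have ok_r : climbable (E r j) by case/and4P: rng_r => x1 _ _ y2; apply/andP.
have le_i'r : (i' <= r)%N.
  rewrite leqNgt; apply/negP => lt_ri'.
  case: stop => [|/negP]; first lia.
  by apply; apply: (up_ok_mono (r := r) (j := j)) => //; lia.
have [e1 e2] := entry_le le_i'r lt_r (leqnn j) lt_j.
have ok_i' : climbable (E i' j).
  case/andP: ready' => _ /orP[// | /eqP eq_i'].
  by apply: (up_ok_mono (r := r) (j := j)) => //; lia.
split.
  move: rng_r ok_i'; rewrite /in_range /up_ok => /and4P[_ x2 y1 _] /andP[x1 y2].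
  by apply/and4P; split => //; lra.
move: le_i'r; rewrite leq_eqVlt => /orP[/eqP-> | lt_i'r]; first exact: lexle_refl.
by apply: lexltW; rewrite /lexlt (entry_lt1 j lt_i'r lt_r).
Qed.

Definition swept j0 m q := entry_in_cols j0 m q /\ in_rng q.

Lemma swept0 j0 q : ~ swept j0 0 q.
Proof. by case=> [[r [j [_ /andP[? ?] _]]] _]; lia. Qed.

Lemma sweptS j0 m q : swept j0 m.+1 q ->
  (exists2 r, (r < n)%N & q = E r j0 /\ in_rng q) \/ swept j0.+1 m q.
Proof.
case=> [[r [j [lt_r /andP[le_j lt_j] ->]]] rng]; case: (ltnP j0 j) => [gt_j | le_j'].
  by right; split=> //; exists r, j; split => //; lia.
left; have eq_j : j = j0 by lia.
by subst j; exists r.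
Qed.

Lemma swept_shift j0 m q : swept j0.+1 m q -> swept j0 m.+1 q.
Proof. by case=> [[r [j [lt_r /andP[? ?] ->]]] rng]; split=> //; exists r, j; split=> //; lia. Qed.

Lemma swept_head j0 m r : (r < n)%N -> in_rng (E r j0) -> swept j0 m.+1 (E r j0).
Proof. by move=> lt_r rng; split=> //; exists r, j0; split => //; lia. Qed.

Definition update_cand (m0 : point R) (b : bool) cand :=
  if b && (if cand is Some c then lexlt m0 c else true) then Some m0 else cand.

Lemma update_cand_le m0 b cand q : cand = Some q ->
  exists2 c, update_cand m0 b cand = Some c & lexle c q.
Proof.
move=> ->; rewrite /update_cand; case: ifP => [/andP[_ /lexltW le_m0] | _].
  by exists m0.
by exists q => //; apply: lexle_refl.
Qed.

Lemma update_cand_new m0 (b : bool) cand : b ->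
  exists2 c, update_cand m0 b cand = Some c & lexle c m0.
Proof.
rewrite /update_cand => ->; case: cand => [c|] /=; last by exists m0; rewrite ?lexle_refl.
case: ifP => [_ | ]; first by exists m0; rewrite ?lexle_refl.
by rewrite lexltNge => /negbFE; exists c.
Qed.

Lemma sweep_cons j js i cand : sweep SA SB xmin xmax ymin ymax (j :: js) i cand =
  let '(i', st) := climb SA SB xmin ymax i i j in
  let '(res, t) := sweep SA SB xmin xmax ymin ymax js i'
     (update_cand (E i' j) (in_rng (E i' j)) cand) in
  (res, (t + st + 1)%N).
Proof. by []. Qed.

Lemma sweepP m j0 i cand : (j0 + m <= n)%N -> ((0 < m)%N -> row_ready i j0) ->
  let: (res, t) := sweep SA SB xmin xmax ymin ymax (iota j0 m) i cand in
  [/\ forall p, res = Some p -> cand = Some p \/ swept j0 m p,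
      forall q, cand = Some q \/ swept j0 m q -> exists2 p, res = Some p & lexle p q
    & (t <= m + i)%N].
Proof.
elim: m j0 i cand => [|m IH] j0 i cand le_m ready.
  split=> //; first by move=> p ->; left.
  by move=> q [-> | /swept0 //]; exists q; rewrite ?lexle_refl.
have lt_j0 : (j0 < n)%N by lia.
rewrite [iota _ _]/= sweep_cons.
have := columnP lt_j0 (ready isT); case: climb => i' st [ready' -> le_i' col_min].
have next_ready : (0 < m)%N -> row_ready i' j0.+1.
  move=> m_gt0; case/andP: ready' => lt_i' /orP[ok | last_row]; apply/andP; split => //.
    by rewrite (up_ok_mono (r := i') (j := j0)) //; lia.
  by rewrite last_row orbT.
have cand_le := @update_cand_le (E i' j0) (in_rng (E i' j0)) cand.
have cand_new := @update_cand_new (E i' j0) (in_rng (E i' j0)) cand.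
have := IH j0.+1 i' (update_cand (E i' j0) (in_rng (E i' j0)) cand) ltac:(lia) next_ready.
case: sweep => res t [res_swept res_min res_time]; split; last by lia.
- move=> p /res_swept [|]; last by right; apply: swept_shift.
  rewrite /update_cand; case: ifP => [/andP[rng _] [<-] | _ ->]; last by left.
  by right; apply: swept_head; case/andP: ready'.
- move=> q [/cand_le [c upd_c le_cq] | /sweptS [[r lt_r [-> rng_r]] | sw]].
  + by have [p ? le_pc] := res_min c (or_introl upd_c); exists p => //; apply: lexle_trans le_cq.
  + have [rng' le_i'r] := col_min r lt_r rng_r.
    have [c upd_c le_c] := cand_new rng'.
    have [p ? le_pc] := res_min c (or_introl upd_c); exists p => //.
    exact: lexle_trans le_pc (lexle_trans le_c le_i'r).
  + exact: res_min q (or_intror sw).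
Qed.

Lemma range_minP :
  let: (res, t) := range_min SA SB xmin xmax ymin ymax in
  [/\ forall p, res = Some p -> is_entry p /\ in_rng p,
      forall q, is_entry q -> in_rng q -> exists2 p, res = Some p & lexle p q
    & (t <= 2 * n)%N].
Proof.
rewrite /range_min sizeA.
have := @sweepP n 0 n.-1 None (leqnn _).
case: sweep => res t [| res_swept res_min res_time].
  by move=> _; apply/andP; split; [lia | rewrite eqxx orbT].
split; last by lia.
- by move=> p /res_swept [].
- by move=> q Eq rng_q; apply: res_min; right.
Qed.

End Sweep.

Local Notation M11 := (E 0 0).
Local Notation Mnn := (E n.-1 n.-1).
Local Notation search_range c := (in_range c.1 Mnn.1 Mnn.2 c.2).

Definition pareto_entry q := is_entry q /\ forall q', is_entry q' -> ~~ dominates q' q.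

Lemma is_entryE r j : (r < n)%N -> (j < n)%N -> is_entry (E r j).
Proof. by move=> lt_r lt_j; exists r, j; split. Qed.

Lemma is_entry_ge_Mnn q : is_entry q -> Mnn.2 <= q.2.
Proof.
case=> r [j [lt_r /andP[_ lt_j] ->]].
have lt_last : (n.-1 < n)%N by rewrite ltn_predL.
by case: (@entry_le r n.-1 j n.-1 ltac:(lia) lt_last ltac:(lia) lt_last).
Qed.

Lemma entry_eq_M11 q : is_entry q -> q.1 <= M11.1 -> q = M11.
Proof.
case=> r [j [lt_r /andP[_ lt_j] ->]]; rewrite /entry /padd /= => le_x.
have [a _] := staircase_le stA (leq0n r) ltac:(by rewrite sizeA).
have [b _] := staircase_le stB (leq0n j) ltac:(by rewrite sizeB).
case: (posnP r) => [-> | r_gt0]; last first.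
  by have [a' _] := stA r_gt0 ltac:(by rewrite sizeA); exfalso; lra.
case: (posnP j) => [-> // | j_gt0].
by have [b' _] := stB j_gt0 ltac:(by rewrite sizeB); exfalso; lra.
Qed.

Lemma entry_eq_Mnn q : is_entry q -> q.2 <= Mnn.2 -> q = Mnn.
Proof.
case=> r [j [lt_r /andP[_ lt_j] ->]]; rewrite /entry /padd /= => le_y.
have lt_lastA : (n.-1 < size SA)%N by rewrite sizeA ltn_predL.
have lt_lastB : (n.-1 < size SB)%N by rewrite sizeB ltn_predL.
have [le_r le_j] : (r <= n.-1)%N /\ (j <= n.-1)%N by lia.
have [_ a] := staircase_le stA le_r lt_lastA.
have [_ b] := staircase_le stB le_j lt_lastB.
case: (ltnP r n.-1) => [lt_r' | ge_r].
  by have [_ a'] := stA lt_r' lt_lastA; exfalso; lra.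
case: (ltnP j n.-1) => [lt_j' | ge_j].
  by have [_ b'] := stB lt_j' lt_lastB; exfalso; lra.
have -> : r = n.-1 by lia.
by have -> : j = n.-1 by lia.
Qed.

Lemma pareto_M11 : pareto_entry M11.
Proof.
split=> [|q Eq]; first exact: is_entryE.
by apply/negP => /and3P[ne_q le_x _]; move/eqP: ne_q; apply; apply: entry_eq_M11.
Qed.

Lemma pareto_Mnn : pareto_entry Mnn.
Proof.
have lt_last : (n.-1 < n)%N by rewrite ltn_predL.
split=> [|q Eq]; first exact: is_entryE.
by apply/negP => /and3P[ne_q _ le_y]; move/eqP: ne_q; apply; apply: entry_eq_Mnn.
Qed.

Lemma pareto_in_range c p : pareto_entry c -> pareto_entry p ->
  c.1 < p.1 -> p != Mnn -> search_range c p.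
Proof.
move=> [Ec _] [Ep ndp] lt_cp ne_p; have le_y := is_entry_ge_Mnn Ep.
have lt_x : p.1 < Mnn.1.
  rewrite ltNge; apply/negP => ge_x.
  by have := ndp _ (proj1 pareto_Mnn); rewrite /dominates eq_sym ne_p ge_x le_y.
have lt_y : p.2 < c.2.
  rewrite ltNge; apply/negP => ge_y.
  have := ndp _ Ec; rewrite /dominates (ltW lt_cp) ge_y !andbT negbK => /eqP eq_cp.
  by move: lt_cp; rewrite eq_cp ltxx.
by rewrite /in_range (ltW lt_cp) lt_x le_y lt_y.
Qed.

Definition range_lexmin (c m : point R) :=
  [/\ is_entry m, search_range c m
    & forall q, is_entry q -> search_range c q -> lexle m q].

Section RangeLexmin.
Variables c m : point R.
Hypotheses (Pc : pareto_entry c) (min_m : range_lexmin c m).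

Lemma range_lexmin_gt : c.1 < m.1.
Proof.
case: min_m => Em /and4P[ge_x _ _ lt_y] _.
rewrite lt_neqAle ge_x andbT; apply/negP => /eqP eq_x.
have := Pc.2 m Em; rewrite /dominates -eq_x lexx (ltW lt_y) !andbT negbK.
by move=> /eqP eq_mc; move: lt_y; rewrite eq_mc ltxx.
Qed.

Lemma range_lexmin_pareto : pareto_entry m.
Proof.
case: min_m => Em /and4P[_ lt_x _ lt_y] le_m; split=> // q Eq.
apply/negP => dom_qm; move: (dom_qm) => /and3P[_ le_qx le_qy].
have lt_cq : c.1 < q.1.
  rewrite ltNge; apply/negP => le_x.
  have lt_qy : q.2 < c.2 by apply: le_lt_trans lt_y.
  have := Pc.2 q Eq; rewrite /dominates le_x (ltW lt_qy) !andbT negbK => /eqP eq_qc.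
  by move: lt_qy; rewrite eq_qc ltxx.
have rng_q : search_range c q.
  rewrite /in_range (ltW lt_cq) (le_lt_trans le_qx lt_x) (is_entry_ge_Mnn Eq).
  exact: le_lt_trans le_qy lt_y.
by have := le_m q Eq rng_q; rewrite -[lexle _ _]negbK -lexltNge dominates_lexlt.
Qed.

Lemma range_lexmin_next p : pareto_entry p -> c.1 < p.1 -> p.1 <= m.1 -> p = m.
Proof.
move=> Pp lt_cp le_pm; case: min_m => Em /and4P[_ lt_x _ _] le_m.
have ne_p : p != Mnn by apply: contraTneq le_pm => ->; rewrite -ltNge.
have := le_m p Pp.1 (pareto_in_range Pc Pp lt_cp ne_p).
case: (eqVneq m p) => [-> // | ne_mp le_mp].
by have := Pp.2 m Em; rewrite lexle_dominates.
Qed.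

End RangeLexmin.

Definition loop_inv C c :=
  [/\ pareto_entry c, uniq C, {in C, forall p, pareto_entry p}
    & forall p, pareto_entry p -> (p \in C) = (p.1 <= c.1) || (p == Mnn)].

Lemma loop_inv_init : loop_inv (undup [:: M11; Mnn]) M11.
Proof.
split; [exact: pareto_M11 | exact: undup_uniq | |].
  by move=> p; rewrite mem_undup !inE => /orP[] /eqP->; [exact: pareto_M11 | exact: pareto_Mnn].
move=> p Pp; rewrite mem_undup !inE.
case: (eqVneq p M11) => [-> | ne_p]; first by rewrite lexx.
by case: leP => // le_x; case/eqP: ne_p; apply: entry_eq_M11 Pp.1 le_x.
Qed.

Lemma loop_inv_step C c m : loop_inv C c -> range_lexmin c m -> loop_inv (rcons C m) m.
Proof.
move=> [Pc uC PC memC] min_m.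
have Pm := range_lexmin_pareto Pc min_m; have lt_cm := range_lexmin_gt Pc min_m.
have ne_m : m != Mnn.
  by case: min_m => _ /and4P[_ lt_x _ _] _; apply: contraTneq lt_x => ->; rewrite ltxx.
split=> //.
- by rewrite rcons_uniq uC andbT (memC m Pm) negb_or -ltNge lt_cm.
- by move=> p; rewrite mem_rcons inE => /orP[/eqP-> | /PC].
move=> p Pp; rewrite mem_rcons inE memC //.
case: (eqVneq p m) => [-> | ne_pm] /=; first by rewrite lexx.
case: (eqVneq p Mnn) => [_ | _]; rewrite ?orbT ?orbF //.
case: (leP p.1 c.1) => [le_pc | lt_cp]; first by rewrite (le_trans le_pc (ltW lt_cm)).
apply/esym/negbTE/negP => le_pm; move/eqP: ne_pm; apply.
exact: (range_lexmin_next Pc min_m Pp lt_cp le_pm).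
Qed.

Lemma loop_inv_stop C c : loop_inv C c ->
  (forall q, is_entry q -> ~ search_range c q) -> forall p, pareto_entry p -> p \in C.
Proof.
move=> [Pc _ _ memC] empty p Pp; rewrite memC //.
apply/negPn/negP; rewrite negb_or -ltNge => /andP[lt_cp ne_p].
exact: empty _ Pp.1 (pareto_in_range Pc Pp lt_cp ne_p).
Qed.

Lemma sss_loop_S f xmax ymin C xmin ymax :
  sss_loop f.+1 SA SB xmax ymin C xmin ymax =
  let '(res, t) := range_min SA SB xmin xmax ymin ymax in
  match res with
  | None => (C, t.+1, (size SA + size SB + size C + 10)%N)
  | Some m =>
      let '(C', t', sp') := sss_loop f SA SB xmax ymin (rcons C m) m.1 m.2 in
      (C', (t + t' + 1)%N, maxn (size SA + size SB + size C + 10)%N sp')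
  end.
Proof. by []. Qed.

Lemma sss_loopP f C c k :
  loop_inv C c ->
  (forall C', uniq C' -> {in C', forall p, pareto_entry p} -> (size C' <= k)%N) ->
  (k < f + size C)%N ->
  let: (C', t, sp) := sss_loop f SA SB Mnn.1 Mnn.2 C c.1 c.2 in
  (* one sweep per Pareto point still missing from C, plus the final empty one *)
  [/\ forall p, pareto_entry p <-> p \in C', (t <= (k.+1 - size C) * (2 * n + 2))%N
    & (sp <= 2 * n + k + 10)%N].
Proof.
elim: f C c => [|f IH] C c inv size_le fuel.
  by case: inv => _ uC PC _; have := size_le C uC PC; lia.
have size_C : (size C <= k)%N by case: inv => _ uC PC _; exact: size_le.
have space : (size SA + size SB + size C + 10 <= 2 * n + k + 10)%N by lia.
rewrite sss_loop_S; have := range_minP c.1 Mnn.1 Mnn.2 c.2.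
case: range_min => [[m|] t] [res_in res_min time].
  have min_m : range_lexmin c m.
    have [Em rng_m] := res_in m erefl.
    by split=> // q Eq rng_q; have [_ [<-]] := res_min q Eq rng_q.
  have inv' := loop_inv_step inv min_m.
  have size_C' : (size C < k)%N.
    by case: inv' => _ uC' PC' _; have := size_le _ uC' PC'; rewrite size_rcons.
  have := IH _ _ inv' size_le ltac:(rewrite size_rcons; lia).
  case: sss_loop => [[C' t'] sp'] [mem_C' time' space']; split=> //.
    by rewrite size_rcons in time'; nia.
  by rewrite geq_max space.
split; [|nia|done] => p; split; last by case: inv => _ _ PC _; apply: PC.
apply: loop_inv_stop inv _ p => q Eq rng_q.
by have [] := res_min q Eq rng_q.
Qed.

Variables A B : seq (point R).
Hypotheses (permA : perm_eq SA A) (permB : perm_eq SB B).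

Lemma is_entry_minkowski q : is_entry q <-> q \in minkowski A B.
Proof.
split=> [[r [j [lt_r /andP[_ lt_j] ->]]] | /allpairsP[[a b] [/= Aa Bb ->]]].
  apply/allpairsP; exists (nth (0, 0) SA r, nth (0, 0) SB j); split => //.
  - by rewrite -(perm_mem permA) mem_nth // sizeA.
  - by rewrite -(perm_mem permB) mem_nth // sizeB.
move: Aa Bb; rewrite -(perm_mem permA) -(perm_mem permB).
case/(nthP (0, 0)) => r lt_r <-; case/(nthP (0, 0)) => j lt_j <-.
rewrite sizeA in lt_r; rewrite sizeB in lt_j.
exact: (is_entryE lt_r lt_j).
Qed.

Lemma pareto_entry_sum p : pareto_entry p <-> p \in pareto_sum A B.
Proof.
rewrite /pareto_sum mem_undup mem_filter; split.
  case=> /is_entry_minkowski -> nd; rewrite andbT.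
  by apply/hasPn => q /is_entry_minkowski; apply: nd.
case/andP => /hasPn nd /is_entry_minkowski Ep; split => // q /is_entry_minkowski.
exact: nd.
Qed.

Lemma pareto_sum_gt0 : (0 < size (pareto_sum A B))%N.
Proof. by have /pareto_entry_sum := pareto_M11; case: pareto_sum. Qed.

Lemma sss_loop_pareto_sum :
  let: (C, t, sp) :=
    sss_loop (n * n).+1 SA SB Mnn.1 Mnn.2 (undup [:: M11; Mnn]) M11.1 M11.2 in
  [/\ C =i pareto_sum A B, (t <= size (pareto_sum A B) * (2 * n + 2))%N
    & (sp <= 2 * n + size (pareto_sum A B) + 10)%N].
Proof.
have k_le : (size (pareto_sum A B) <= n * n)%N.
  by have := size_pareto_sum A B; rewrite -(perm_size permA) -(perm_size permB) sizeA sizeB.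
have size_le C : uniq C -> {in C, forall p, pareto_entry p} ->
    (size C <= size (pareto_sum A B))%N.
  by move=> uC PC; apply: uniq_leq_size => // p /PC /pareto_entry_sum.
have C0_gt0 : (0 < size (undup [:: M11; Mnn]))%N by rewrite /=; case: ifP.
have := sss_loopP (f := (n * n).+1) loop_inv_init size_le ltac:(lia).
case: sss_loop => [[C t] sp] [mem_C time space]; split=> //.
- by move=> p; apply/idP/idP => [/mem_C/pareto_entry_sum | /pareto_entry_sum/mem_C].
- by apply: leq_trans time (leq_mul _ (leqnn _)); lia.
Qed.

End Matrix.


Theorem mainTheorem9 :
  exists c : nat,
  forall (R : realDomainType) (n : nat) (A B : seq (point R)),
    (0 < n)%N -> size A = n -> size B = n ->
    pareto_set A -> pareto_set B ->
    let k := size (pareto_sum A B) in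
    [/\ SSS_output A B =i pareto_sum A B,
        (SSS_time A B <= c * (n * up_log 2 n + n * k))%N
      & (SSS_space A B <= c * (n + k))%N].
Proof.
exists 10%N => R n A B n_gt0 sizeA sizeB parA parB k.
have := msort_fP (leqnn (size A)); have := msort_fP (leqnn (size B)).
rewrite /SSS_output /SSS_time /SSS_space /SSS /msort sizeA sizeB.
case: msort_f => [[SB tB] pB] [permB sortB timeB spaceB].
case: msort_f => [[SA tA] pA] [permA sortA timeA spaceA].
have sizeSA : size SA = n by rewrite (perm_size permA).
have sizeSB : size SB = n by rewrite (perm_size permB).
have stA := sorted_pareto_staircase parA permA sortA.
have stB := sorted_pareto_staircase parB permB sortB.
have k_gt0 := pareto_sum_gt0 sizeSA sizeSB stA stB n_gt0 permA permB.
have := sss_loop_pareto_sum sizeSA sizeSB stA stB n_gt0 permA permB.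
rewrite sizeSA; cbv zeta; case: sss_loop => [[C tL] pL] [mem_C timeL spaceL] /=.
rewrite -/k in k_gt0 timeL spaceL; split=> //.
- by move: timeA timeB; move: (up_log 2 n) => L timeA timeB; nia.
- by rewrite !geq_max; apply/and3P; split; lia.
Qed.
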